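(* For positive integers $M_1,N_1,M_2,N_2$, let $\mathcal{O}(M_1,N_1,M_2,N_2)$ denote the set of $(d_1,d_2)\in\mathbb{R}_+^2$ satisfying $$d_i\le\min(M_i,N_i),\ i=1,2,\qquad d_1+\frac{\min(N_1,N_2,M_2)}{\min(N_2,M_2)}\,d_2\le\min(M_1+M_2,N_1).$$ Then $\mathcal{O}(M_1,N_1,M_2,N_2)=\mathcal{O}\big(M_1,N_1,\min(M_2,N_2),\min(M_2,N_2)\big)$.
   Context: The set $\mathcal{O}(M_1,N_1,M_2,N_2)$ is the DoF outer region of a two-user MIMO Z interference channel without channel state information at the transmitters, with $M_i$ transmit and $N_i$ receive antennas at user $i$. *)

From Stdlib Require Import Reals Arith.
Open Scope R_scope.

Definition outer_region (M1 N1 M2 N2 : nat) : R * R -> Prop :=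
  fun d =>
    0 <= fst d /\ 0 <= snd d /\
    fst d <= INR (Nat.min M1 N1) /\
    snd d <= INR (Nat.min M2 N2) /\
    fst d + INR (Nat.min N1 (Nat.min N2 M2)) / INR (Nat.min N2 M2) * snd d
      <= INR (Nat.min (M1 + M2) N1).

(* Write [k = min M2 N2] and [c = min(N1,k) / k <= 1]; the region only sees M2 and N2
   through [k], except in the right-hand side [min(M1 + M2, N1)] of the sum constraint.
   If [N1 <= M1 + k], that right-hand side is [N1] whether M2 or [k] is used.  Otherwise
   the sum constraint is implied by the box [d1 <= M1, d2 <= k], since
   [d1 + c d2 <= M1 + k <= min(M1 + M2, N1)]. *)

From Stdlib Require Import Reals Arith Lia Lra FunctionalExtensionality PropExtensionality.
Open Scope R_scope.

Lemma pred_ext {A : Type} (P Q : A -> Prop) : (forall x, P x <-> Q x) -> P = Q.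
Proof.
  intros PQ; apply functional_extensionality; intros x.
  apply propositional_extensionality, PQ.
Qed.

(* For [k = 0] the ratio is [0 / 0 = 0] in Rocq. *)
Lemma INR_min_div_le_1 (n k : nat) : INR (Nat.min n k) / INR k <= 1.
Proof.
  destruct k as [|k].
  - rewrite Nat.min_0_r; unfold Rdiv; rewrite Rmult_0_l; lra.
  - assert (Hk : 0 < INR (S k)) by (apply lt_0_INR; lia).
    assert (Hle : INR (Nat.min n (S k)) <= INR (S k)) by apply le_INR, Nat.le_min_r.
    unfold Rdiv; rewrite <- (Rinv_r (INR (S k))) by lra.
    apply Rmult_le_compat_r; [left; apply Rinv_0_lt_compat|]; assumption.
Qed.

Definition dof_box (a b : nat) (d : R * R) : Prop :=
  0 <= fst d <= INR a /\ 0 <= snd d <= INR b.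

Definition dof_sum_region (a k n : nat) (d : R * R) : Prop :=
  dof_box a k d /\ fst d + INR (Nat.min n k) / INR k * snd d <= INR n.

Lemma outer_region_sum (M1 N1 M2 N2 : nat) :
  (N1 <= M1 + Nat.min M2 N2)%nat ->
  outer_region M1 N1 M2 N2 = dof_sum_region (Nat.min M1 N1) (Nat.min M2 N2) N1.
Proof.
  intros HN1; apply pred_ext; intros [d1 d2].
  unfold outer_region, dof_sum_region, dof_box; simpl.
  rewrite (Nat.min_comm N2 M2).
  replace (Nat.min (M1 + M2) N1) with N1 by lia.
  tauto.
Qed.

Lemma outer_region_box (M1 N1 M2 N2 : nat) :
  (M1 + Nat.min M2 N2 < N1)%nat ->
  outer_region M1 N1 M2 N2 = dof_box (Nat.min M1 N1) (Nat.min M2 N2).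
Proof.
  intros HN1; apply pred_ext; intros [d1 d2].
  unfold outer_region, dof_box; simpl.
  rewrite (Nat.min_comm N2 M2).
  set (k := Nat.min M2 N2) in *.
  split; [tauto|].
  intros [[Hd1 Hd1a] [Hd2 Hd2k]]; repeat split; try assumption.
  assert (Hs : INR (Nat.min M1 N1) + INR k <= INR (Nat.min (M1 + M2) N1)).
  { rewrite <- plus_INR; apply le_INR; unfold k in *; lia. }
  pose proof (INR_min_div_le_1 N1 k) as Hc.
  nra.
Qed.

Theorem lemma6 (M1 N1 M2 N2 : nat) :
  (0 < M1)%nat -> (0 < N1)%nat -> (0 < M2)%nat -> (0 < N2)%nat ->
  outer_region M1 N1 M2 N2 =
  outer_region M1 N1 (Nat.min M2 N2) (Nat.min M2 N2).
Proof.
  intros _ _ _ _.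
  set (k := Nat.min M2 N2).
  destruct (le_lt_dec N1 (M1 + k)) as [Hsum | Hbox].
  - rewrite (outer_region_sum M1 N1 M2 N2 Hsum),
      (outer_region_sum M1 N1 k k); rewrite Nat.min_id; easy.
  - rewrite (outer_region_box M1 N1 M2 N2 Hbox),
      (outer_region_box M1 N1 k k); rewrite Nat.min_id; easy.
Qed.
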